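(* For all $y\in\{0,1\}^n$ and all $s_1,\dots,s_\ell\in\{0,1\}^n$, with $S=\{s_1,\dots,s_\ell\}$, $$\tilde G_y^2\,\hat a^\dagger_{s_1}\cdots\hat a^\dagger_{s_\ell}|\mathrm{vac}\rangle=\gamma_y^{(S)}\,\hat a^\dagger_{s_1}\cdots\hat a^\dagger_{s_\ell}|\mathrm{vac}\rangle.$$
   Context: Bosonic setting with $2^n$ modes indexed by $\{0,1\}^n$: position operators $\hat a_x,\hat a_x^\dagger$ with $[\hat a_x,\hat a_y^\dagger]=\delta_{xy}$, $[\hat a_x,\hat a_y]=[\hat a_x^\dagger,\hat a_y^\dagger]=0$, vacuum $|\mathrm{vac}\rangle$ annihilated by all $\hat a_x$; momentum operators $\tilde a_y=2^{-n/2}\sum_x(-1)^{x\cdot y}\hat a_x$, $\tilde a_y^\dagger=2^{-n/2}\sum_x(-1)^{x\cdot y}\hat a_x^\dagger$. Single $y$-momentum hopping operator $\tilde G_y=\frac1{\sqrt\ell}\sum_{x\in\{0,1\}^n}\tilde a^\dagger_{x\oplus y}\tilde a_x$. $\gamma_y^{(S)}=\frac1\ell\sum_{i,j\in[\ell]}(-1)^{y\cdot(s_i\oplus s_j)}$. *)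

(* scalars in algC (algebraic complex numbers, has sqrtC). *)
From mathcomp Require Import all_boot all_order all_algebra all_field.
Set Implicit Arguments. Unset Strict Implicit. Unset Printing Implicit Defensive.
Import Order.TTheory GRing.Theory Num.Theory.
Local Open Scope ring_scope.

Definition Mode (n : nat) := {ffun 'I_n -> bool}.

Definition xorm n (x y : Mode n) : Mode n := [ffun i => x i (+) y i].
Definition dotm n (x y : Mode n) : nat := (\sum_(i < n) (x i && y i))%N.
Definition sgn n (x y : Mode n) : algC := (-1) ^+ dotm x y.

(* Occupation-number configurations and Fock-space vectors, given by their
   coefficients in the occupation-number (position) basis. *)
Definition Occ n := {ffun Mode n -> nat}.
Definition State n := Occ n -> algC.

Definition setocc n (m : Occ n) (x : Mode n) (k : nat) : Occ n :=
  [ffun z => if z == x then k else m z].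

Definition vac n : State n := fun m => if m == [ffun=> 0%N] then 1 else 0.

(* position creation / annihilation operators:
   a^dag |k> = sqrt(k+1) |k+1>,  a |k> = sqrt k |k-1> *)
Definition adag n (x : Mode n) (psi : State n) : State n := fun m =>
  if m x is k.+1 then sqrtC (k.+1)%:R * psi (setocc m x k) else 0.
Definition ann n (x : Mode n) (psi : State n) : State n := fun m =>
  sqrtC ((m x).+1)%:R * psi (setocc m x (m x).+1).

Definition mann n (y : Mode n) (psi : State n) : State n := fun m =>
  (sqrtC (2 ^ n)%:R)^-1 * \sum_(x : Mode n) sgn x y * ann x psi m.
Definition madag n (y : Mode n) (psi : State n) : State n := fun m =>
  (sqrtC (2 ^ n)%:R)^-1 * \sum_(x : Mode n) sgn x y * adag x psi m.

Definition Ghop n (l : nat) (y : Mode n) (psi : State n) : State n := fun m =>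
  (sqrtC l%:R)^-1 * \sum_(x : Mode n) madag (xorm x y) (mann x psi) m.

Definition gammaS n (l : nat) (y : Mode n) (s : 'I_l -> Mode n) : algC :=
  (l%:R)^-1 * \sum_(i < l) \sum_(j < l) sgn y (xorm (s i) (s j)).

Definition createAll n (l : nat) (s : 'I_l -> Mode n) : State n :=
  foldr (fun x psi => adag x psi) (@vac n) [seq s i | i <- enum 'I_l].

(** In the occupation-number basis [G_y] is diagonal: expanding both momentum
    operators, the sum over [x] of the characters [(-1)^(u.(x+y)) (-1)^(v.x)]
    vanishes unless [u = v], so [G_y = l^(-1/2) sum_u (-1)^(u.y) n_u] with
    [n_u] the number operator of mode [u].  The state
    [a^dag_(s_1) ... a^dag_(s_l) |vac>] lives on the single configuration
    counting the [s_i], where [G_y] therefore acts as the scalar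
    [l^(-1/2) sum_i (-1)^(s_i.y)], whose square is [gamma_y^(S)]. *)
From mathcomp Require Import all_boot all_order all_algebra all_field.
From mathcomp Require Import ring.
From Stdlib Require Import FunctionalExtensionality.
Set Implicit Arguments. Unset Strict Implicit. Unset Printing Implicit Defensive.
Import Order.TTheory GRing.Theory Num.Theory.
Local Open Scope ring_scope.

Lemma sum_mul_count_mem (T : finType) (R : pzSemiRingType) (f : T -> R) (xs : seq T) :
  \sum_(u : T) f u * (count_mem u xs)%:R = \sum_(x <- xs) f x.
Proof.
elim: xs => [|x xs IHxs] /=.
  by rewrite big_nil big1 // => u _; rewrite mulr0.
rewrite big_cons -IHxs.
under eq_bigr do rewrite natrD mulrDr.
rewrite big_split /= (bigD1 x) //= eqxx mulr1 big1 ?addr0 // => u ux.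
by rewrite eq_sym (negbTE ux) mulr0.
Qed.

Lemma mulVsqrtC (a : algC) : (sqrtC a)^-1 * (sqrtC a)^-1 = a^-1.
Proof. by rewrite -expr2 exprVn sqrtCK. Qed.

Section Characters.
Variable n : nat.
Implicit Types u v w x y : Mode n.

Lemma sgnE x y : sgn x y = \prod_(i < n) (-1) ^+ (x i && y i).
Proof. by rewrite /sgn /dotm (big_morph _ (exprD (-1)) (expr0 _)). Qed.

Lemma sgnC x y : sgn x y = sgn y x.
Proof. by rewrite !sgnE; apply: eq_bigr => i _; rewrite andbC. Qed.

Lemma sgn_xorl u v w : sgn (xorm u v) w = sgn u w * sgn v w.
Proof.
rewrite !sgnE -big_split /=; apply: eq_bigr => i _; rewrite ffunE.
by case: (u i); case: (v i); case: (w i); rewrite ?expr0 ?expr1 ?mulr1 ?mul1r ?mulrNN ?mulr1.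
Qed.

Lemma sgn_xorr u v w : sgn w (xorm u v) = sgn w u * sgn w v.
Proof. by rewrite sgnC sgn_xorl !(sgnC w). Qed.

(* Flipping one bit where [w] is set is a sign-reversing involution. *)
Lemma sum_sgn w :
  \sum_x sgn x w = if w == [ffun=> false] then (2 ^ n)%:R else 0.
Proof.
case: eqP => [->|/eqP w_neq0].
  rewrite (eq_bigr (fun _ => 1)) => [|x _]; last first.
    by rewrite sgnE big1 // => i _; rewrite ffunE andbF.
  by rewrite sumr_const card_ffun card_bool card_ord.
have [i wi] : exists i, w i.
  apply/existsP; apply: contraR w_neq0 => /existsPn w0.
  by apply/eqP/ffunP => i; rewrite ffunE; apply/negbTE.
pose e : Mode n := [ffun j => j == i].
have flipK : involutive (fun x : Mode n => xorm x e).
  by move=> x; apply/ffunP => j; rewrite !ffunE addbK.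
have sgn_e : sgn e w = -1.
  rewrite sgnE (bigD1 i) //= big1 ?mulr1 => [|j /negbTE ji]; last first.
    by rewrite ffunE ji.
  by rewrite ffunE eqxx wi expr1.
have /eqP : \sum_x sgn x w = - \sum_x sgn x w.
  rewrite {1}(reindex_inj (inv_inj flipK)) /= -sumrN.
  by apply: eq_bigr => x _; rewrite sgn_xorl sgn_e mulrN1.
by rewrite -subr_eq0 opprK -mulr2n -mulr_natr mulf_eq0 pnatr_eq0 orbF => /eqP.
Qed.

Lemma sum_sgnM u v :
  \sum_x sgn x u * sgn x v = if u == v then (2 ^ n)%:R else 0.
Proof.
under eq_bigr do rewrite -sgn_xorr.
rewrite sum_sgn; congr (if _ then _ else _).
apply/eqP/eqP => [/ffunP uv|->]; last by apply/ffunP => j; rewrite !ffunE addbb.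
by apply/ffunP => j; move: (uv j); rewrite !ffunE; case: (u j); case: (v j).
Qed.

Lemma sum_sgn_hop y u v :
  \sum_x sgn u (xorm x y) * sgn v x = if u == v then sgn u y * (2 ^ n)%:R else 0.
Proof.
under eq_bigr do rewrite sgn_xorr mulrAC (sgnC u) (sgnC v).
by rewrite -mulr_suml sum_sgnM; case: eqP => [->|_]; rewrite ?mul0r // mulrC.
Qed.

End Characters.

Section Operators.
Variable n : nat.
Implicit Types (u v x y z : Mode n) (psi : State n) (m : Occ n).

Lemma adag_ann u psi m : adag u (ann u psi) m = (m u)%:R * psi m.
Proof.
rewrite /adag /ann; case mu: (m u) => [|k]; first by rewrite mul0r.
rewrite ffunE eqxx mulrA -expr2 sqrtCK; congr (_ * psi _).
by apply/ffunP => w; rewrite !ffunE; case: eqP => [->|]; rewrite ?mu.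
Qed.

Lemma adag_mann u x psi m :
  adag u (mann x psi) m =
  (sqrtC (2 ^ n)%:R)^-1 * \sum_v sgn v x * adag u (ann v psi) m.
Proof.
rewrite /adag /mann; case: (m u) => [|k].
  by rewrite big1 ?mulr0 // => v _; rewrite mulr0.
by rewrite mulrCA mulr_sumr; congr (_ * _); apply: eq_bigr => v _; rewrite mulrCA.
Qed.

Lemma madag_mann z x psi m :
  madag z (mann x psi) m =
  ((2 ^ n)%:R)^-1 * \sum_u \sum_v sgn u z * sgn v x * adag u (ann v psi) m.
Proof.
rewrite /madag -mulVsqrtC -mulrA; congr (_ * _).
rewrite mulr_sumr; apply: eq_bigr => u _; rewrite adag_mann mulrCA mulr_sumr.
by congr (_ * _); apply: eq_bigr => v _; rewrite mulrA.
Qed.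

Lemma Ghop_diag l y psi m :
  Ghop l y psi m =
  (sqrtC l%:R)^-1 * (\sum_u sgn u y * (m u)%:R) * psi m.
Proof.
rewrite /Ghop -mulrA; congr (_ * _).
under eq_bigr do rewrite madag_mann.
rewrite -mulr_sumr exchange_big /= mulr_suml mulr_sumr.
have two_pow_neq0 : (2 ^ n)%:R != 0 :> algC by rewrite pnatr_eq0 expn_eq0.
apply: eq_bigr => u _; rewrite exchange_big /=.
under eq_bigr do rewrite -mulr_suml sum_sgn_hop.
rewrite (bigD1 u) //= eqxx big1 ?addr0 => [|v]; last first.
  by rewrite eq_sym => /negbTE->; rewrite mul0r.
by rewrite adag_ann [sgn u y * _]mulrC -mulrA mulKf // mulrA.
Qed.

End Operators.

Definition adags n (xs : seq (Mode n)) : State n :=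
  foldr (fun x psi => adag x psi) (@vac n) xs.

Definition occ n (xs : seq (Mode n)) : Occ n := [ffun z => count_mem z xs].

Lemma adags_supp n (xs : seq (Mode n)) m : adags xs m != 0 -> m = occ xs.
Proof.
rewrite /adags; elim: xs m => [|x xs IHxs] m /=.
  rewrite /vac; case: (m =P [ffun=> 0%N]) => [-> _|_]; last by rewrite eqxx.
  by apply/ffunP => z; rewrite !ffunE.
rewrite /adag; case mx: (m x) => [|k]; first by rewrite eqxx.
rewrite mulf_eq0 negb_or => /andP[_ /IHxs/ffunP occ_set].
apply/ffunP => z; move: (occ_set z); rewrite !ffunE /=.
by case: eqP => [->|/eqP zx]; [rewrite eqxx mx => <- | rewrite eq_sym (negbTE zx)].
Qed.

Lemma gammaS_sqr n l (y : Mode n) (s : 'I_l -> Mode n) :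
  gammaS y s = (l%:R)^-1 * (\sum_(i < l) sgn (s i) y) ^+ 2.
Proof.
rewrite /gammaS expr2 mulr_suml; congr (_ * _); apply: eq_bigr => i _.
by rewrite mulr_sumr; apply: eq_bigr => j _; rewrite sgn_xorr !(sgnC y).
Qed.

Theorem mainTheorem10 (n l : nat) (y : Mode n) (s : 'I_l -> Mode n) :
  Ghop l y (Ghop l y (createAll s)) = (fun m => gammaS y s * createAll s m).
Proof.
apply: functional_extensionality => m; rewrite !Ghop_diag.
have [->|psi_neq0] := eqVneq (createAll s m) 0; first by rewrite !mulr0.
have -> : \sum_u sgn u y * (m u)%:R = \sum_(i < l) sgn (s i) y.
  have /adags_supp -> : adags [seq s i | i <- enum 'I_l] m != 0 := psi_neq0.
  under eq_bigr do rewrite ffunE.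
  by rewrite sum_mul_count_mem big_map big_enum.
by rewrite gammaS_sqr -mulVsqrtC; ring.
Qed.
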